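(* Let $G$ be a torsion-free group, $\mathbb{F}$ a field, $\alpha$ a zero divisor in $\mathbb{F}[G]$ with $|supp(\alpha)|=4$ and $|S_\alpha|=12$, and let $\beta$ be a non-zero element of $\mathbb{F}[G]$ with $\alpha\beta=0$. Then $Z(\alpha,\beta)$ is the induced subgraph on the vertex set $supp(\beta)$ of the Cayley graph of $G$ with respect to $S_\alpha$.
   Context: $supp(\gamma)=\{x\in G:\gamma_x\ne0\}$; $S_\alpha=\{h^{-1}h':h\ne h',\ h,h'\in supp(\alpha)\}$. The zero-divisor graph $Z(\alpha,\beta)$ is the multigraph with vertex set $supp(\beta)$ whose edges are the sets $\{(h,h',g,g'),(h',h,g',g)\}$ with $h,h'\in supp(\alpha)$, $g,g'\in supp(\beta)$, $g\ne g'$, $hg=h'g'$, each joining $g$ and $g'$. The Cayley graph of $G$ with respect to an inverse-closed $S\not\ni1$ is the simple graph on $G$ in which $x,y$ are adjacent iff $xy^{-1}\in S$. *)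

From HB Require Import structures.
From mathcomp Require Import all_boot all_algebra finmap.
From mathcomp Require Import monoid.
Set Implicit Arguments. Unset Strict Implicit. Unset Printing Implicit Defensive.
Import GRing.Theory.
Local Open Scope fset_scope.

Notation groupAlg G F := {fsfun G -> F with 0%R}.

Section Defs.
Variables (G : groupType) (F : fieldType).

Definition torsion_free : Prop :=
  forall (x : G) (n : nat), (0 < n)%N -> (x ^+ n)%g = 1%g -> x = 1%g.

Definition supp (a : groupAlg G F) : {fset G} := finsupp a.

Definition galg_mul_coef (a b : groupAlg G F) (x : G) : F :=
  (\sum_(h <- supp a) a h * b (h^-1 * x)%g)%R.

Definition galg_mul_zero (a b : groupAlg G F) : Prop :=
  forall x : G, galg_mul_coef a b x = 0%R.

Definition galg_nonzero (a : groupAlg G F) : Prop := exists x : G, a x != 0%R.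

Definition zero_divisor (a : groupAlg G F) : Prop :=
  galg_nonzero a /\
  exists b : groupAlg G F, galg_nonzero b /\ (galg_mul_zero a b \/ galg_mul_zero b a).

Definition S_of (a : groupAlg G F) : {fset G} :=
  [fset (h^-1 * h')%g | h in supp a, h' in supp a & h != h'].

(* The zero-divisor graph Z(alpha, beta).  Quadruples (h,h',g,g') are encoded
   as (((h, h'), g), g'). *)
Definition Zquads (a b : groupAlg G F) : {fset G * G * G * G} :=
  [fset q in (supp a `*` supp a) `*` supp b `*` supp b
     | (q.1.2 != q.2) && ((q.1.1.1 * q.1.2)%g == (q.1.1.2 * q.2)%g)].

Definition qswap (q : G * G * G * G) : G * G * G * G :=
  (q.1.1.2, q.1.1.1, q.2, q.1.2).

Definition Zedges (a b : groupAlg G F) : {fset {fset G * G * G * G}} :=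
  [fset [fset q; qswap q] | q in Zquads a b].

Definition endpoints (e : {fset G * G * G * G}) : {fset G} :=
  [fset q.1.2 | q in e].

Definition Z_mult (a b : groupAlg G F) (g g' : G) : nat :=
  #|` [fset e in Zedges a b | endpoints e == [fset g; g']] |.

Definition cayley_adj (S : {fset G}) (x y : G) : bool := (x * y^-1)%g \in S.

End Defs.

From HB Require Import structures.
From mathcomp Require Import all_boot all_algebra finmap.
From mathcomp Require Import monoid.
Local Open Scope fset_scope.
Set Implicit Arguments. Unset Strict Implicit.

(* For g != g' in supp beta, an edge {(h,h',g,g'),(h',h,g',g)} of Z(alpha,beta)
   is determined by the pair (h,h'), and h g = h' g' says exactly that
   h^-1 h' = g g'^-1 with h != h'.  So the edges joining g and g' are in
   bijection with the fibre over g g'^-1 of (h,h') |-> h^-1 h' on the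
   n(n-1) off-diagonal pairs of supp alpha, whose image is S_alpha.  With
   n = 4 and |S_alpha| = 12 = 4 * 3 this map is injective, so the fibre has
   one point when g g'^-1 is in S_alpha and none otherwise. *)

Section OffDiagonal.
Variable T : choiceType.
Implicit Type A : {fset T}.

Definition offdiag A : {fset T * T} := [fset p in A `*` A | p.1 != p.2].

Lemma in_offdiag A (p : T * T) :
  (p \in offdiag A) = [&& p.1 \in A, p.2 \in A & p.1 != p.2].
Proof. by rewrite !inE andbA. Qed.

Lemma card_offdiag A : #|` offdiag A| = #|` A| * (#|` A|).-1.
Proof.
have -> : offdiag A =
    [fset ((x, y) : T * T) | x in [fset x in A | true], y in [fset y in A | y != x]].
  apply/fsetP => -[x y]; rewrite in_offdiag /=; apply/idP/imfset2P => [/and3P[xA yA xy]|].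
    by exists x; rewrite ?inE ?xA //; exists y; rewrite // !inE yA eq_sym.
  by case=> x' + [y' + [-> ->]]; rewrite !inE => /andP[-> _] /andP[-> ]; rewrite eq_sym.
rewrite card_fset_sum1.
rewrite -(pair_big_dep_cond _ _ (fun=> A) predT (fun x y => y != x) (fun _ _ => 1)) /=.
rewrite big_seq_cond (eq_bigr (fun=> (#|` A|).-1)) => [|x /andP[xA _]].
  by rewrite -big_seq_cond big_const_seq count_predT iter_addn_0 mulnC.
by rewrite sum1_count -size_filter -(size_rem xA) rem_filter ?fset_uniq.
Qed.
End OffDiagonal.

Lemma card_fiber_in_inj (T T' : choiceType) (f : T -> T') (D : {fset T}) (y : T') :
  {in D &, injective f} -> #|` [fset x in D | f x == y]| = (y \in f @` D).
Proof.
move=> f_inj; have [/imfsetP[/= x xD ->]|yNfD] := boolP (y \in f @` D).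
  suff -> : [fset z in D | f z == f x] = [fset x] by rewrite cardfs1.
  by apply/fsetP => z; rewrite !inE; apply/andP/eqP => [[zD /eqP/(f_inj _ _ zD xD)]|->].
apply/eqP; rewrite cardfs_eq0; apply/eqP/fsetP => z; rewrite !inE.
by apply/negbTE/andP => -[zD /eqP fz]; rewrite -fz in_imfset in yNfD.
Qed.

Lemma eq_fset2 (T : choiceType) (x y u v : T) :
  x != y -> [fset x; y] = [fset u; v] -> (x, y) = (u, v) \/ (x, y) = (v, u).
Proof.
move=> xy E.
have xuv : x \in [fset u; v] by rewrite -E !inE eqxx.
have yuv : y \in [fset u; v] by rewrite -E !inE eqxx orbT.
move: xuv yuv; rewrite !inE => /orP[]/eqP ex /orP[]/eqP ey; subst;
  by [left | right | rewrite eqxx in xy].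
Qed.

Definition pair_ldiv {G : groupType} (p : G * G) : G := (p.1^-1 * p.2)%g.

Lemma eq_mulg_ldiv (G : groupType) (h h' g g' : G) :
  (h * g == h' * g')%g = (h^-1 * h' == g * g'^-1)%g.
Proof. by rewrite (can2_eq (mulKg h) (mulVKg h)) mulgA -divg_eq eq_sym. Qed.

Lemma mulg_eq_neq (G : groupType) (h h' x y : G) :
  (h * x = h' * y)%g -> x != y -> h != h'.
Proof.
by move=> hxy; apply: contra_neq => eqhh'; apply: (mulgI h); rewrite hxy eqhh'.
Qed.

Section ZeroDivisorGraph.
Variables (G : groupType) (F : fieldType) (a b : groupAlg G F).

Lemma S_ofE : S_of a = pair_ldiv @` offdiag (supp a).
Proof.
apply/fsetP => x; apply/imfset2P/imfsetP => [[h hA [h']]|[[h h']]].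
  by rewrite !inE => /andP[h'A hh'] ->; exists (h, h'); rewrite // in_offdiag hA h'A.
rewrite in_offdiag => /and3P[/= hA h'A hh'] ->.
by exists h => //; exists h'; rewrite // !inE h'A.
Qed.

Lemma S_of_cardP :
  reflect {in offdiag (supp a) &, injective pair_ldiv}
          (#|` S_of a| == #|` supp a| * (#|` supp a|).-1).
Proof. by rewrite S_ofE -card_offdiag; apply: card_in_imfsetP. Qed.

Lemma mem_Zquads (h h' x y : G) :
  ((h, h', x, y) \in Zquads a b) =
  [&& h \in supp a, h' \in supp a, x \in supp b, y \in supp b, x != y
    & (h * x == h' * y)%g].
Proof. by rewrite !inE /= -!andbA. Qed.

Lemma endpoints_edge (q : G * G * G * G) :
  endpoints [fset q; qswap q] = [fset q.1.2; q.2].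
Proof.
apply/fsetP => x; apply/imfsetP/idP => [[y + ->]|].
  by rewrite !inE => /orP[]/eqP ->; rewrite eqxx ?orbT.
rewrite !inE => /orP[]/eqP ->; [exists q | exists (qswap q)] => //.
  by rewrite !inE eqxx.
by rewrite !inE eqxx orbT.
Qed.

Variables (g g' : G).
Hypotheses (gB : g \in supp b) (g'B : g' \in supp b) (neq_gg' : g != g').

Definition ldiv_fiber : {fset G * G} :=
  [fset p in offdiag (supp a) | pair_ldiv p == (g * g'^-1)%g].

Definition edge_of (p : G * G) : {fset G * G * G * G} :=
  [fset (p.1, p.2, g, g'); (p.2, p.1, g', g)].

Lemma Zedges_between :
  [fset e in Zedges a b | endpoints e == [fset g; g']] = edge_of @` ldiv_fiber.
Proof.
apply/fsetP => e; rewrite inE; apply/andP/imfsetP => [[/imfsetP[q qZ ->]]|[p + ->]].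
  case: q qZ => [[[h h'] x] y]; rewrite mem_Zquads endpoints_edge /=.
  case/and5P=> hA h'A _ _ /andP[xy hxy] /eqP/(eq_fset2 xy)[[ex ey]|[ex ey]]; subst x y.
    exists (h, h') => //.
    by rewrite !inE /= hA h'A -eq_mulg_ldiv hxy (mulg_eq_neq (eqP hxy)).
  exists (h', h); last by apply/fsetP => z; rewrite !inE orbC.
  rewrite !inE /= hA h'A -eq_mulg_ldiv /= [X in _ && X]eq_sym hxy andbT eq_sym.
  exact: mulg_eq_neq (eqP hxy) xy.
move=> /[!inE] /andP[/andP[/andP[p1A p2A] _] ldivp]; split.
  apply/imfsetP; exists (p.1, p.2, g, g') => //.
  by rewrite mem_Zquads p1A p2A gB g'B neq_gg' eq_mulg_ldiv.
by rewrite endpoints_edge.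
Qed.

Lemma Z_mult_card_fiber : Z_mult a b g g' = #|` ldiv_fiber|.
Proof.
rewrite /Z_mult Zedges_between card_in_imfset // => p r _ _ /fsetP/(_ (p.1, p.2, g, g')).
rewrite !inE eqxx /= => /esym/orP[/eqP[e1 e2]|/eqP[_ _ eg]].
  by case: p r e1 e2 => [? ?] [? ?] /= -> ->.
by move: neq_gg'; rewrite eg eqxx.
Qed.

End ZeroDivisorGraph.

Theorem mainTheorem10 (G : groupType) (F : fieldType)
    (alpha beta : groupAlg G F) :
  torsion_free G ->
  zero_divisor alpha ->
  #|` supp alpha| = 4%N ->
  #|` S_of alpha| = 12%N ->
  galg_nonzero beta ->
  galg_mul_zero alpha beta ->
  forall g g' : G, g \in supp beta -> g' \in supp beta -> g != g' ->
    Z_mult alpha beta g g' = (if cayley_adj (S_of alpha) g g' then 1%N else 0%N).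
Proof.
move=> _ _ card_supp card_S _ _ g g' gB g'B neq_gg'.
have ldiv_inj : {in offdiag (supp alpha) &, injective pair_ldiv}.
  by apply/S_of_cardP; rewrite card_supp card_S.
rewrite (Z_mult_card_fiber alpha gB g'B neq_gg') card_fiber_in_inj // -S_ofE.
by rewrite /cayley_adj; case: (_ \in _).
Qed.
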